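(* Let $H$ be a finite two-step nilpotent $p$-group with cyclic commutator subgroup $[H,H]$, and let $A$ be a maximal abelian subgroup of $H$. Then $m_{\mathsf{faithful}}(H)\le [H:A]+m_{\mathsf{faithful}}(Z(H))-1$.
   Context: For a finite group $G$, $m_{\mathsf{faithful}}(G)$ denotes the smallest dimension of a faithful complex representation of $G$. *)

From HB Require Import structures.
From mathcomp Require Import all_boot all_order all_algebra all_fingroup all_solvable all_field all_character.
Set Implicit Arguments. Unset Strict Implicit. Unset Printing Implicit Defensive.

Definition has_faithful_rep (gT : finGroupType) (G : {group gT}) (n : nat) : Prop :=
  exists rG : mx_representation algC G n, mx_faithful rG.

Definition is_m_faithful (gT : finGroupType) (G : {group gT}) (m : nat) : Prop :=
  has_faithful_rep G m /\ (forall n, has_faithful_rep G n -> m <= n).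

(* Write E for the socle Omega_1(Z(H)), elementary abelian.  A normal subgroup of
   the p-group H that meets E trivially is trivial, so a character of H is faithful
   as soon as its kernel meets E trivially.  Since [H,H] is central and cyclic, some
   irreducible chi is faithful on [H,H]; then S := E \cap ker chi meets [H,H]
   trivially, so S is separated by at most log_p |S| linear characters, and
   log_p |S| < log_p |E| because chi does not kill the subgroup of order p of
   [H,H], which lies in E.  A faithful representation of the abelian group Z(H)
   splits into lines whose kernels each have index at most p in E and meet
   trivially, so log_p |E| <= m(Z(H)).  Finally chi(1) <= [H:A] because chi is a
   constituent of a character induced from the abelian subgroup A.  Hence chi plus
   these linear characters, padded with trivial ones, is a faithful character of
   degree [H:A] + m(Z(H)) - 1. *)

From HB Require Import structures.
From mathcomp Require Import all_boot all_order all_algebra all_fingroup all_solvable all_field all_character.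
Set Implicit Arguments. Unset Strict Implicit. Unset Printing Implicit Defensive.
Import Order.TTheory GRing.Theory Num.Theory.

Section PGroupFacts.

Local Open Scope group_scope.

Variable gT : finGroupType.
Implicit Types H K : {group gT}.

Lemma logn_proper_pgroup (p : nat) H K :
  p.-group K -> H \proper K -> logn p #|H| < logn p #|K|.
Proof.
move=> pK ltHK; have pH := pgroupS (proper_sub ltHK) pK.
have ntK : K :!=: 1.
  by rewrite -cardG_gt1 (leq_trans _ (proper_card ltHK)) // ltnS cardG_gt0.
have [p_pr _ _] := pgroup_pdiv pK ntK.
by rewrite -(ltn_exp2l _ _ (prime_gt1 p_pr)) -!card_pgroup ?proper_card.
Qed.

End PGroupFacts.

Section CharacterKernels.

Local Open Scope group_scope.
Local Open Scope ring_scope.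

Variables (gT : finGroupType) (G : {group gT}).
Implicit Types (phi psi xi : 'CF(G)) (s : seq 'CF(G)).

Lemma cfker_charDl phi psi :
  phi \is a character -> psi \is a character -> cfker (phi + psi) \subset cfker phi.
Proof.
move=> Nphi Npsi; rewrite (cfkerE Nphi) subsetI cfker_sub.
apply/bigcapsP=> i phi_i; apply: cfker_constt (rpredD Nphi Npsi) _.
move: phi_i; rewrite !irr_consttE cfdotDl paddr_eq0 ?natr_ge0 ?Cnat_cfdot_char_irr //.
by apply: contra => /andP[].
Qed.

Lemma sum_char s :
  all (fun phi => phi \is a character) s -> \sum_(phi <- s) phi \is a character.
Proof. by move=> Ns; rewrite big_seq rpred_sum // => phi /(allP Ns). Qed.

Lemma cfker_sum_char s :
  all (fun phi => phi \is a character) s ->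
  cfker (\sum_(phi <- s) phi) \subset \bigcap_(phi <- s) cfker phi.
Proof.
elim: s => [|phi s IHs] /=; first by rewrite !big_nil cfker_cfun0 subsetT.
case/andP=> Nphi Ns; rewrite !big_cons subsetI cfker_charDl ?sum_char //= addrC.
by rewrite (subset_trans (cfker_charDl _ _) (IHs Ns)) ?sum_char.
Qed.

Lemma sum_lin_char1 s :
  all (fun xi => xi \is a linear_char) s -> (\sum_(xi <- s) xi) 1%g = (size s)%:R.
Proof.
elim: s => [|xi s IHs] /=; first by rewrite big_nil cfunE.
by case/andP=> Lxi Ls; rewrite big_cons cfunE (IHs Ls) lin_char1 // -add1n natrD.
Qed.

Lemma card_irr_constt_le_char1 phi :
  phi \is a character -> #|irr_constt phi|%:R <= phi 1%g.
Proof.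
move=> Nphi; rewrite {2}[phi]cfun_sum_constt sum_cfunE -sumr_const.
apply: ler_sum => i phi_i; rewrite cfunE.
have /natrP[m Dm] := Cnat_cfdot_char_irr i Nphi.
have /natrP[d chi1] := Cnat_irr1 i.
move: phi_i (irr1_gt0 i); rewrite irr_consttE Dm chi1 -natrM ler1n ltr0n.
by rewrite pnatr_eq0 muln_gt0 -lt0n => -> ->.
Qed.

Lemma irr1_le_index_abelian (A : {group gT}) (i : Iirr G) :
  A \subset G -> abelian A -> 'chi_i 1%g <= #|G : A|%:R.
Proof.
move=> sAG cAA; have [j Aj] := neq0_has_constt (Res_irr_neq0 A i).
have Gi : i \in irr_constt ('Ind[G] 'chi_j) by rewrite constt_Ind_Res.
apply: le_trans (char1_ge_constt (cfInd_char G (irr_char j)) Gi) _.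
by rewrite cfInd1 // lin_char1 ?mulr1 //; apply/char_abelianP.
Qed.

Lemma indexg_cfker_lin_dvd_exponent xi :
  xi \is a linear_char -> (#|G : cfker xi| %| exponent G)%N.
Proof.
move=> Lxi; rewrite -card_quotient ?cfker_norm //.
have Zxi : ('Z(xi))%CF = G.
  apply/eqP; rewrite eqEsubset cfcenter_sub; apply/subsetP => x Gx.
  by rewrite char_cfcenterE ?lin_charW // normC_lin_char // lin_char1.
have cycGK := cfcenter_cyclic xi; rewrite Zxi in cycGK.
by rewrite -exponent_cyclic // exponent_quotient.
Qed.

Lemma cyclic_pgroup_TI_cfker (p : nat) (C : {group gT}) :
  p.-group C -> cyclic C -> exists i : Iirr G, cfker 'chi_i :&: C = 1%g.
Proof.
move=> pC cycC; have [-> | ntC] := eqsVneq C 1%g; first by exists 0; rewrite setIg1.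
have oC1 := Ohm1_cyclic_pgroup_prime cycC pC ntC.
have [p_pr _ _] := pgroup_pdiv pC ntC.
have [i not_sC1K] : exists i, ~~ ('Ohm_1(C) \subset cfker 'chi[G]_i).
  apply/existsP; apply: contraR ntC => /existsPn sC1K.
  rewrite -Ohm1_eq1 -subG1 -(TI_cfker_irr G).
  by apply/bigcapsP => i _; apply/negbNE/sC1K.
by exists i; apply: TI_Ohm1; rewrite setIC prime_TIg ?oC1.
Qed.

Lemma has_faithful_rep_char phi (d n : nat) :
    phi \is a character -> cfker phi \subset [1] -> phi 1%g = d%:R ->
    (d <= n)%N ->
  has_faithful_rep G n.
Proof.
move=> Nphi ffphi phi1 le_dn.
have Npad : (n - d)%:R *: (1 : 'CF(G)) \is a character.
  by rewrite rpredZnat ?cfun1_char.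
have /char_reprP[[m rG] DrG] := rpredD Nphi Npad.
have <- : m = n.
  apply/eqP; rewrite -(eqr_nat algC) -(cfRepr1 rG) -DrG !cfunE phi1.
  by rewrite cfun1E group1 mulr1 -natrD subnKC.
exists rG; rewrite /mx_faithful -cfker_repr.
rewrite -[cfRepr rG]/(cfRepr (Representation rG)) -DrG.
exact: subset_trans (cfker_charDl Nphi Npad) ffphi.
Qed.

Lemma has_faithful_rep_irr_lin (i : Iirr G) s (d n : nat) :
    nilpotent G -> all (fun xi => xi \is a linear_char) s -> 'chi_i 1%g = d%:R ->
    'Ohm_1('Z(G)) :&: cfker 'chi_i :&: \bigcap_(xi <- s) cfker xi \subset [1] ->
    (d + size s <= n)%N ->
  has_faithful_rep G n.
Proof.
move=> nilG Ls chi1 tiEs le_n.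
have Nchi_s : all (fun xi => xi \is a character) ('chi_i :: s).
  by rewrite /= irr_char; apply/allP => xi /(allP Ls)/lin_charW.
set psi := \sum_(xi <- 'chi_i :: s) xi.
have sKpsi : cfker psi \subset cfker 'chi_i :&: \bigcap_(xi <- s) cfker xi.
  by have := cfker_sum_char Nchi_s; rewrite big_cons.
apply: (has_faithful_rep_char (sum_char Nchi_s) _ _ le_n).
  apply/trivgP/(TI_center_nil nilG (cfker_normal psi))/TI_Ohm1/trivgP.
  apply: subset_trans tiEs.
  change (cfker psi :&: 'Ohm_1('Z(G)) \subset
          'Ohm_1('Z(G)) :&: cfker 'chi_i :&: \bigcap_(xi <- s) cfker xi).
  by rewrite -setIA setIC setIS.
by rewrite big_cons cfunE chi1 sum_lin_char1 // -natrD.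
Qed.

End CharacterKernels.

Section LinearCharacterCounting.

Local Open Scope group_scope.
Local Open Scope ring_scope.

Variables (gT : finGroupType) (G : {group gT}).
Implicit Types (E S : {group gT}) (s : seq 'CF(G)).

Lemma card_dvd_expn_lin_cfker (p : nat) E s :
    E \subset G -> (exponent E %| p)%N -> all (fun xi => xi \is a linear_char) s ->
    E :&: \bigcap_(xi <- s) cfker xi \subset [1] ->
  (#|E| %| p ^ size s)%N.
Proof.
elim: s E => [|xi s IHs] E sEG expE /=.
  by rewrite big_nil setIT expn0 => _ /trivgP->; rewrite cards1.
case/andP=> Lxi Ls; rewrite big_cons setIA => tiEs.
have sKE : E :&: cfker xi \subset E := subsetIl _ _.
rewrite -(Lagrange sKE) expnSr dvdn_mul //.
  apply: IHs => //; first exact: subset_trans sKE sEG.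
  exact: dvdn_trans (exponentS sKE) expE.
change (#|E : E :&: cfker xi| %| p)%N; rewrite -cfker_Res ?lin_charW //.
exact: dvdn_trans (indexg_cfker_lin_dvd_exponent (cfRes_lin_char E Lxi)) expE.
Qed.

Lemma card_le_expn_faithful_rep_abelian (p n : nat) E :
    abelian G -> has_faithful_rep G n -> E \subset G -> (exponent E %| p)%N ->
    (0 < p)%N ->
  (#|E| <= p ^ n)%N.
Proof.
move=> cGG [rG ffG] sEG expE p_gt0; set phi := cfRepr rG.
pose s := [seq 'chi[G]_i | i <- enum (irr_constt phi)].
have size_s : (size s <= n)%N.
  rewrite size_map -cardE -(ler_nat algC) -(cfRepr1 rG).
  exact: card_irr_constt_le_char1 (cfRepr_char rG).
apply: leq_trans (leq_pexp2l p_gt0 size_s).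
apply: dvdn_leq; first by rewrite expn_gt0 p_gt0.
apply: (card_dvd_expn_lin_cfker sEG expE).
  by apply/allP => _ /mapP[i _ ->]; apply/char_abelianP.
rewrite big_map big_enum /=; apply: subset_trans (setSI _ sEG) _.
by rewrite -cfkerE ?cfRepr_char // cfker_repr.
Qed.

Lemma logn_Ohm1_le_faithful_rep_abelian (p n : nat) :
    prime p -> p.-group G -> abelian G -> has_faithful_rep G n ->
  (logn p #|'Ohm_1(G)| <= n)%N.
Proof.
move=> p_pr pG cGG ffG; have sEG := Ohm_sub 1 G.
have /andP[_ expE] : abelian 'Ohm_1(G) && (exponent 'Ohm_1(G) %| p)%N.
  by rewrite -abelemE // Ohm1_abelem.
rewrite -(leq_exp2l _ _ (prime_gt1 p_pr)) -card_pgroup ?(pgroupS sEG) //.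
exact: card_le_expn_faithful_rep_abelian cGG ffG sEG expE (prime_gt0 p_pr).
Qed.

Lemma lin_chars_TI_cfker (p : nat) S :
    p.-group S -> S \subset G -> S :&: G^`(1)%g \subset [1] ->
  exists s, [/\ all (fun xi => xi \is a linear_char) s,
              (size s <= logn p #|S|)%N
            & S :&: \bigcap_(xi <- s) cfker xi \subset [1]].
Proof.
elim: {S}_.+1 {-2}S (ltnSn #|S|) => // n IHn S leSn pS sSG tiSG'.
have [-> | ntS] := eqsVneq S 1%g.
  by exists [::]; split; rewrite ?big_nil ?setIT.
have [x Sx ntx] := trivgPn _ ntS.
have notG'x : x \notin G^`(1)%g.
  by apply: contra ntx => G'x; have := subsetP tiSG' x; rewrite !inE Sx G'x; apply.
have [i /andP[Li notKx]] : exists i : Iirr G,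
    ('chi_i \is a linear_char) && (x \notin cfker 'chi_i).
  apply/existsP; apply: contraR notG'x => /existsPn sKx.
  by rewrite -cap_cfker_lin_irr; apply/bigcapP => i Li; move: (sKx i); rewrite Li negbK.
set S' := (S :&: cfker 'chi_i)%G.
have ltS'S : S' \proper S.
  by apply/properP; split; [exact: subsetIl | exists x; rewrite // inE (negbTE notKx) andbF].
have sS'S := proper_sub ltS'S.
have ltS'n : (#|S'| < n)%N := leq_trans (proper_card ltS'S) leSn.
have tiS'G' : S' :&: G^`(1)%g \subset [1] := subset_trans (setSI _ sS'S) tiSG'.
have [s [Ls size_s tiS's]] :=
  IHn S' ltS'n (pgroupS sS'S pS) (subset_trans sS'S sSG) tiS'G'.
exists ('chi_i :: s); split; rewrite /= ?Li ?big_cons ?setIA //.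
exact: leq_ltn_trans size_s (logn_proper_pgroup pS ltS'S).
Qed.

End LinearCharacterCounting.

Theorem corollary3p8 (gT : finGroupType) (p : nat) (H A : {group gT})
  (mH mZ : nat) :
  prime p -> (p.-group H)%g -> nil_class H = 2 -> cyclic [~: H, H]%g ->
  [max A of B | (B \subset H) && abelian B]%g ->
  is_m_faithful H mH -> is_m_faithful 'Z(H)%G mZ ->
  mH <= #|H : A|%g + mZ - 1.
Proof.
Local Open Scope group_scope.
Local Open Scope ring_scope.
move=> p_pr pH clH2 cycH' maxA [_ minH] [ffZ _].
have /andP[sAH cAA] := maxgroupp maxA.
have sH'Z : H^`(1)%g \subset 'Z(H) by rewrite -nil_class2 clH2.
have ntH' : H^`(1)%g != 1%g by apply/eqP => /derG1P; rewrite -nil_class1 clH2.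
have pZ : p.-group 'Z(H) := pgroupS (center_sub H) pH.
set E := 'Ohm_1('Z(H))%G; have sEZ : E \subset 'Z(H) := Ohm_sub 1 _.
have [i tiKH'] := cyclic_pgroup_TI_cfker H (pgroupS (der_sub 1 H) pH) cycH'.
set S := (E :&: cfker 'chi[H]_i)%G.
have ltSE : (logn p #|S| < logn p #|E|)%N.
  apply: logn_proper_pgroup (pgroupS sEZ pZ) _; rewrite properE subsetIl subsetI subxx.
  apply: contra ntH' => sEK; rewrite -Ohm1_eq1 -subG1 -tiKH' subsetI Ohm_sub andbT.
  exact: subset_trans (OhmS 1 sH'Z) sEK.
have tiSH' : S :&: H^`(1)%g \subset [1] by rewrite -tiKH' setSI // subsetIr.
have sSH : S \subset H := subset_trans (subsetIl _ _) (subset_trans sEZ (center_sub H)).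
have [s [Ls size_s tiSs]] := lin_chars_TI_cfker (pgroupS sSH pH) sSH tiSH'.
have leEmZ := logn_Ohm1_le_faithful_rep_abelian p_pr pZ (center_abelian H) ffZ.
have /natrP[d chi1] := Cnat_irr1 i.
have le_dA : (d <= #|H : A|)%N by rewrite -(ler_nat algC) -chi1 irr1_le_index_abelian.
apply/minH/(has_faithful_rep_irr_lin (pgroup_nil pH) Ls chi1 tiSs).
have lt_s_mZ : (size s < mZ)%N := leq_ltn_trans size_s (leq_trans ltSE leEmZ).
have mZ_gt0 : (0 < mZ)%N := leq_ltn_trans (leq0n _) lt_s_mZ.
by rewrite -addnBA // leq_add // subn1 -ltnS prednK.
Qed.
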